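(* Let $A=(A,\oplus,\odot)$ be a skew brace and $B$ a characteristic subgroup of $A_{\oplus}$ such that $A_{\oplus}^{(n)}\leq B$ for some positive integer $n$. If $\mathrm{Aut}(A_{\oplus}/B)$ is solvable of derived length $m$, then $A_{\odot}^{(m+n)}\leq B$.
   Context: A skew brace is a set $A$ with two binary operations $\oplus,\odot$ such that $A_{\oplus}=(A,\oplus)$ and $A_{\odot}=(A,\odot)$ are groups and $a\odot(b\oplus c)=(a\odot b)\ominus a\oplus(a\odot c)$ for all $a,b,c\in A$, where $\ominus a$ is the inverse of $a$ in $A_{\oplus}$. The derived series of a group $G$ is indexed by $G^{(1)}=G$, $G^{(i+1)}=[G^{(i)},G^{(i)}]$; a solvable group $G$ has derived length $m$ when $G^{(m+1)}=1$ (with $m$ minimal). *)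

(* Groups are handled as "group data" (carrier, equality relation, product,
   inverse, unit) so that arbitrary (possibly infinite) groups, quotient
   groups (via a coset equivalence) and automorphism groups can be treated
   uniformly. *)


Record skew_brace := SkewBrace {
  sb_car :> Type;
  sb_add : sb_car -> sb_car -> sb_car;
  sb_opp : sb_car -> sb_car;
  sb_zero : sb_car;
  sb_mul : sb_car -> sb_car -> sb_car;
  sb_inv : sb_car -> sb_car;
  sb_one : sb_car;
  sb_addA : forall a b c, sb_add a (sb_add b c) = sb_add (sb_add a b) c;
  sb_add0l : forall a, sb_add sb_zero a = a;
  sb_addNl : forall a, sb_add (sb_opp a) a = sb_zero;
  sb_mulA : forall a b c, sb_mul a (sb_mul b c) = sb_mul (sb_mul a b) c;
  sb_mul1l : forall a, sb_mul sb_one a = a;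
  sb_mulVl : forall a, sb_mul (sb_inv a) a = sb_one;
  sb_compat : forall a b c,
    sb_mul a (sb_add b c) = sb_add (sb_add (sb_mul a b) (sb_opp a)) (sb_mul a c)
}.

Record grp_data := GrpData {
  gcar : Type;
  geq : gcar -> gcar -> Prop;
  gop : gcar -> gcar -> gcar;
  ginv : gcar -> gcar;
  gone : gcar
}.

Inductive gen (G : grp_data) (S : gcar G -> Prop) : gcar G -> Prop :=
  | gen_in : forall x, S x -> gen G S x
  | gen_one : gen G S (gone G)
  | gen_op : forall x y, gen G S x -> gen G S y -> gen G S (gop G x y)
  | gen_inv : forall x, gen G S x -> gen G S (ginv G x)
  | gen_eq : forall x y, geq G x y -> gen G S x -> gen G S y.

Definition commg (G : grp_data) (x y : gcar G) : gcar G :=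
  gop G (gop G (gop G (ginv G x) (ginv G y)) x) y.

Fixpoint dser (G : grp_data) (H : gcar G -> Prop) (k : nat) : gcar G -> Prop :=
  match k with
  | O => H
  | S k' => gen G (fun z => exists x y, dser G H k' x /\ dser G H k' y /\
                                      z = commg G x y)
  end.

(* The paper's indexing: H^(1) = H, H^(i+1) = [H^(i), H^(i)]  (i >= 1). *)
Definition derived (G : grp_data) (H : gcar G -> Prop) (i : nat) : gcar G -> Prop :=
  dser G H (pred i).

Definition derived_trivial (G : grp_data) (H : gcar G -> Prop) (i : nat) : Prop :=
  forall x, derived G H i x -> geq G x (gone G).

Definition solvable_derived_length (G : grp_data) (H : gcar G -> Prop) (m : nat) : Prop :=
  derived_trivial G H (S m) /\
  (forall k, derived_trivial G H (S k) -> m <= k).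

Definition add_grp (A : skew_brace) : grp_data :=
  GrpData (sb_car A) (@eq A) (sb_add A) (sb_opp A) (sb_zero A).

Definition mul_grp (A : skew_brace) : grp_data :=
  GrpData (sb_car A) (@eq A) (sb_mul A) (sb_inv A) (sb_one A).

Definition setT {T : Type} : T -> Prop := fun _ => True.

Definition add_subgroup (A : skew_brace) (B : A -> Prop) : Prop :=
  B (sb_zero A) /\
  (forall x y, B x -> B y -> B (sb_add A x y)) /\
  (forall x, B x -> B (sb_opp A x)).

Definition add_aut (A : skew_brace) (f : A -> A) : Prop :=
  (forall x y, f (sb_add A x y) = sb_add A (f x) (f y)) /\
  (forall x y, f x = f y -> x = y) /\
  (forall y, exists x, f x = y).

Definition add_characteristic (A : skew_brace) (B : A -> Prop) : Prop :=
  add_subgroup A B /\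
  forall f, add_aut A f -> forall y, (exists x, B x /\ f x = y) <-> B y.

Definition qeq (A : skew_brace) (B : A -> Prop) (x y : A) : Prop :=
  B (sb_add A (sb_opp A x) y).

(* An automorphism of A_(+)/B is represented by a pair (f, g) of maps
   A -> A inducing mutually inverse maps on cosets, f inducing a
   homomorphism of A_(+)/B.  Two such pairs are equal when they induce
   the same maps on A_(+)/B. *)
Definition aut_quot (A : skew_brace) (B : A -> Prop) : grp_data :=
  GrpData ((A -> A) * (A -> A))%type
    (fun p q => forall x, qeq A B (fst p x) (fst q x) /\ qeq A B (snd p x) (snd q x))
    (fun p q => (fun x => fst p (fst q x), fun x => snd q (snd p x)))
    ((fun p => (snd p, fst p)))
    (fun x => x, fun x => x).

Definition aut_quot_set (A : skew_brace) (B : A -> Prop)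
    (p : ((A -> A) * (A -> A))%type) : Prop :=
  (forall x y, qeq A B x y -> qeq A B (fst p x) (fst p y)) /\
  (forall x y, qeq A B x y -> qeq A B (snd p x) (snd p y)) /\
  (forall x y, qeq A B (fst p (sb_add A x y)) (sb_add A (fst p x) (fst p y))) /\
  (forall x, qeq A B (fst p (snd p x)) x /\ qeq A B (snd p (fst p x)) x).

(* The maps lambda_a(x) = -a + a.x are automorphisms of A_(+) and a -> lambda_a is
   a homomorphism from A_(.) to Aut(A_(+)).  As B is characteristic, it induces a
   homomorphism A_(.) -> Aut(A_(+)/B), which kills A_(.)^(m+1) because the image of
   this subgroup lies in Aut(A_(+)/B)^(m+1) = 1.  So every a in A_(.)^(m+1) acts
   trivially on A_(+)/B, and then a.c = a + lambda_a(c) is congruent to a + c modulo B.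
   Hence the multiplicative and additive derived series agree modulo B from this
   point on: each element of A_(.)^(m+j) is congruent to an element of A_(+)^(j),
   and for j = n the latter lies in B. *)

From Stdlib Require Import Arith Lia.

Section GroupLaws.
Context {T : Type} {op : T -> T -> T} {inv : T -> T} {e : T}.
Hypotheses (opA : forall a b c, op a (op b c) = op (op a b) c)
           (op1g : forall a, op e a = a)
           (opVg : forall a, op (inv a) a = e).

Lemma mulKg a b : op (inv a) (op a b) = b.
Proof. rewrite opA, opVg, op1g. reflexivity. Qed.

Lemma mulgV a : op a (inv a) = e.
Proof. rewrite <- (mulKg (inv a) (op a (inv a))), (mulKg a). apply opVg. Qed.

Lemma mulg1 a : op a e = a.
Proof. rewrite <- (opVg a), opA, mulgV, op1g. reflexivity. Qed.

Lemma mulKVg a b : op a (op (inv a) b) = b.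
Proof. rewrite opA, mulgV, op1g. reflexivity. Qed.

Lemma mulgI a b c : op a b = op a c -> b = c.
Proof. intros H. rewrite <- (mulKg a b), H, mulKg. reflexivity. Qed.

Lemma mulIg a b c : op b a = op c a -> b = c.
Proof.
  intros H. rewrite <- (mulg1 b), <- (mulgV a), opA, H, <- opA, mulgV, mulg1.
  reflexivity.
Qed.

Lemma invg_unique a b : op a b = e -> b = inv a.
Proof. intros H. rewrite <- (mulKg a b), H, mulg1. reflexivity. Qed.

Lemma invgK a : inv (inv a) = a.
Proof. symmetry. apply invg_unique, opVg. Qed.

Lemma invMg a b : inv (op a b) = op (inv b) (inv a).
Proof. symmetry. apply invg_unique. rewrite <- opA, (mulKVg b). apply mulgV. Qed.

Lemma invg1 : inv e = e.
Proof. symmetry. apply invg_unique, op1g. Qed.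

End GroupLaws.

Section GeneratedSubgroups.
Variable G : grp_data.

Lemma gen_mono (S S' : gcar G -> Prop) :
  (forall x, S x -> S' x) -> forall x, gen G S x -> gen G S' x.
Proof.
  intros HS x Hx. induction Hx.
  - apply gen_in, HS; assumption.
  - apply gen_one.
  - apply gen_op; assumption.
  - apply gen_inv; assumption.
  - apply gen_eq with x; assumption.
Qed.

Lemma dser_mono (S S' : gcar G -> Prop) :
  (forall x, S x -> S' x) -> forall k x, dser G S k x -> dser G S' k x.
Proof.
  intros HS k. induction k as [|k IH]; simpl; [exact HS|].
  apply gen_mono. intros z [a [b [Ha [Hb ->]]]]. exists a, b. auto.
Qed.

Lemma dser_add (S : gcar G -> Prop) m j x :
  dser G S (m + j) x -> dser G (dser G S m) j x.
Proof.
  revert x. induction j as [|j IH]; intros x.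
  - rewrite Nat.add_0_r. trivial.
  - rewrite Nat.add_succ_r. simpl.
    apply gen_mono. intros z [a [b [Ha [Hb ->]]]]. exists a, b. auto.
Qed.

End GeneratedSubgroups.

(* Group data need not carry a congruence (e.g. [aut_quot]), so [f] is required to
   preserve commutators separately rather than through products and inverses. *)
Lemma dser_map (G H : grp_data) (SG : gcar G -> Prop) (SH : gcar H -> Prop)
    (f : gcar G -> gcar H) :
  (forall x y, geq G x y -> geq H (f x) (f y)) ->
  geq H (gone H) (f (gone G)) ->
  (forall x y, geq H (gop H (f x) (f y)) (f (gop G x y))) ->
  (forall x, geq H (ginv H (f x)) (f (ginv G x))) ->
  (forall x y, geq H (commg H (f x) (f y)) (f (commg G x y))) ->
  (forall x, SG x -> SH (f x)) ->
  forall k x, dser G SG k x -> dser H SH k (f x).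
Proof.
  intros f_eq f_one f_op f_inv f_commg f_S k.
  induction k as [|k IH]; intros x Hx; simpl in *; [auto|].
  induction Hx as [z [a [b [Ha [Hb ->]]]]| |x y _ IHx _ IHy|x _ IHx|x y Hxy _ IHx].
  - apply gen_eq with (commg H (f a) (f b)); [apply f_commg|].
    apply gen_in. exists (f a), (f b). auto.
  - apply gen_eq with (gone H); [exact f_one | apply gen_one].
  - apply gen_eq with (gop H (f x) (f y)); [apply f_op | apply gen_op; assumption].
  - apply gen_eq with (ginv H (f x)); [apply f_inv | apply gen_inv; assumption].
  - apply gen_eq with (f x); [apply f_eq|]; assumption.
Qed.

Definition add_normal_subgroup (A : skew_brace) (B : A -> Prop) : Prop :=
  add_subgroup A B /\
  forall y z, B z -> B (sb_add A (sb_add A (sb_opp A y) z) y).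

Section Brace.
Variable A : skew_brace.

Local Notation add := (sb_add A).
Local Notation opp := (sb_opp A).
Local Notation zero := (sb_zero A).
Local Notation mul := (sb_mul A).
Local Notation inv := (sb_inv A).
Local Notation one := (sb_one A).

Local Notation addrA := (sb_addA A).
Local Notation add0r := (sb_add0l A).
Local Notation addNr := (sb_addNl A).
Local Notation addrN := (mulgV (sb_addA A) (sb_add0l A) (sb_addNl A)).
Local Notation addr0 := (mulg1 (sb_addA A) (sb_add0l A) (sb_addNl A)).
Local Notation addKr := (mulKg (sb_addA A) (sb_add0l A) (sb_addNl A)).
Local Notation addNKr := (mulKVg (sb_addA A) (sb_add0l A) (sb_addNl A)).
Local Notation addrI := (mulgI (sb_addA A) (sb_add0l A) (sb_addNl A)).
Local Notation addIr := (mulIg (sb_addA A) (sb_add0l A) (sb_addNl A)).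
Local Notation oppr_unique := (invg_unique (sb_addA A) (sb_add0l A) (sb_addNl A)).
Local Notation opprK := (invgK (sb_addA A) (sb_add0l A) (sb_addNl A)).
Local Notation opprD := (invMg (sb_addA A) (sb_add0l A) (sb_addNl A)).
Local Notation oppr0 := (invg1 (sb_addA A) (sb_add0l A) (sb_addNl A)).
Local Notation mulrA := (sb_mulA A).
Local Notation mul1r := (sb_mul1l A).
Local Notation mulVr := (sb_mulVl A).
Local Notation mulrV := (mulgV (sb_mulA A) (sb_mul1l A) (sb_mulVl A)).
Local Notation invrK := (invgK (sb_mulA A) (sb_mul1l A) (sb_mulVl A)).
Local Notation invrM := (invMg (sb_mulA A) (sb_mul1l A) (sb_mulVl A)).
Local Notation invr1 := (invg1 (sb_mulA A) (sb_mul1l A) (sb_mulVl A)).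

Lemma sb_one_zero : one = zero.
Proof.
  pose proof (sb_compat A one zero zero) as H.
  rewrite add0r, !mul1r, addr0, add0r in H.
  rewrite <- (opprK one), <- H, oppr0. reflexivity.
Qed.

Definition lam (a x : A) : A := add (opp a) (mul a x).

Lemma lam_add a x y : lam a (add x y) = add (lam a x) (lam a y).
Proof. unfold lam. rewrite sb_compat, !addrA. reflexivity. Qed.

Lemma lam0 a : lam a zero = zero.
Proof. apply (addrI (lam a zero)). rewrite <- lam_add, add0r, addr0. reflexivity. Qed.

Lemma lam_opp a x : lam a (opp x) = opp (lam a x).
Proof. apply oppr_unique. rewrite <- lam_add, addrN, lam0. reflexivity. Qed.

Lemma lam_mul a b x : lam (mul a b) x = lam a (lam b x).
Proof.
  unfold lam at 3. rewrite lam_add, lam_opp. unfold lam.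
  rewrite opprD, opprK, mulrA, <- addrA, addNKr. reflexivity.
Qed.

Lemma lam1 x : lam one x = x.
Proof. unfold lam. rewrite mul1r, sb_one_zero, oppr0, add0r. reflexivity. Qed.

Lemma lamK a x : lam a (lam (inv a) x) = x.
Proof. rewrite <- lam_mul, mulrV, lam1. reflexivity. Qed.

Lemma lamVK a x : lam (inv a) (lam a x) = x.
Proof. rewrite <- lam_mul, mulVr, lam1. reflexivity. Qed.

Lemma lam_aut a : add_aut A (lam a).
Proof.
  split; [apply lam_add | split].
  - intros x y H. rewrite <- (lamVK a x), H, lamVK. reflexivity.
  - intros y. exists (lam (inv a) y). apply lamK.
Qed.

Section NormalSubgroup.
Variable B : A -> Prop.
Hypothesis B_normal : add_normal_subgroup A B.

Local Notation qeq := (qeq A B).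

Let B0 : B zero.
Proof. apply B_normal. Qed.

Let B_add x y : B x -> B y -> B (add x y).
Proof. apply B_normal. Qed.

Let B_opp x : B x -> B (opp x).
Proof. apply B_normal. Qed.

Let B_conj y z : B z -> B (add (add (opp y) z) y).
Proof. apply B_normal. Qed.

Lemma qeq_refl x : qeq x x.
Proof. unfold qeq. rewrite addNr. exact B0. Qed.

Lemma qeq_sym x y : qeq x y -> qeq y x.
Proof. unfold qeq. intros H. apply B_opp in H. rewrite opprD, opprK in H. exact H. Qed.

Lemma qeq_trans x y z : qeq x y -> qeq y z -> qeq x z.
Proof.
  unfold qeq. intros Hxy Hyz. pose proof (B_add _ _ Hxy Hyz) as H.
  rewrite <- addrA, addNKr in H. exact H.
Qed.

Lemma qeq_add x x' y y' : qeq x x' -> qeq y y' -> qeq (add x y) (add x' y').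
Proof.
  unfold qeq. intros Hx Hy.
  pose proof (B_add _ _ (B_conj y _ Hx) Hy) as H.
  rewrite opprD, <- !addrA. rewrite <- !addrA, addNKr in H. exact H.
Qed.

Lemma qeq_opp x x' : qeq x x' -> qeq (opp x) (opp x').
Proof.
  intros H. apply qeq_sym in H. unfold qeq in *.
  pose proof (B_conj (opp x) _ H) as H'.
  rewrite opprK in *. rewrite <- !addrA, addrN, addr0 in H'. exact H'.
Qed.

Lemma qeq_mem x y : qeq x y -> B y -> B x.
Proof.
  intros Hxy Hy. apply qeq_sym in Hxy. unfold qeq in Hxy.
  pose proof (B_add _ _ Hy Hxy) as H. rewrite addNKr in H. exact H.
Qed.

Definition lam_kernel (a : A) : Prop := forall x, qeq (lam a x) x.

Lemma lam_kernel1 : lam_kernel one.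
Proof. intros x. rewrite lam1. apply qeq_refl. Qed.

Lemma lam_kernelM a b : lam_kernel a -> lam_kernel b -> lam_kernel (mul a b).
Proof. intros Ha Hb x. rewrite lam_mul. eapply qeq_trans; [apply Ha | apply Hb]. Qed.

Lemma lam_kernelV a : lam_kernel a -> lam_kernel (inv a).
Proof.
  intros Ha x. apply qeq_sym. pose proof (Ha (lam (inv a) x)) as H.
  rewrite lamK in H. exact H.
Qed.

Lemma lam_kernel_mul_qeq a c : lam_kernel a -> qeq (mul a c) (add a c).
Proof.
  intros Ha. rewrite <- (addNKr a (mul a c)).
  apply qeq_add; [apply qeq_refl | apply Ha].
Qed.

Lemma lam_kernel_inv_qeq a : lam_kernel a -> qeq (inv a) (opp a).
Proof.
  intros Ha. pose proof (qeq_sym _ _ (lam_kernel_mul_qeq a (inv a) Ha)) as H.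
  rewrite mulrV, sb_one_zero in H.
  pose proof (qeq_add _ _ _ _ (qeq_refl (opp a)) H) as H'.
  rewrite addKr, addr0 in H'. exact H'.
Qed.

Lemma lam_kernel_commg_qeq a b a' b' :
  lam_kernel a -> lam_kernel b -> qeq a a' -> qeq b b' ->
  qeq (commg (mul_grp A) a b) (commg (add_grp A) a' b').
Proof.
  intros Ka Kb Ha Hb. unfold commg; simpl.
  assert (Ka' := lam_kernelV a Ka). assert (Kb' := lam_kernelV b Kb).
  assert (Hinv : forall c c', lam_kernel c -> qeq c c' -> qeq (inv c) (opp c')).
  { intros c c' Kc Hc. eapply qeq_trans; [apply lam_kernel_inv_qeq, Kc|].
    apply qeq_opp, Hc. }
  repeat (eapply qeq_trans; [apply lam_kernel_mul_qeq; repeat apply lam_kernelM; assumption|];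
          apply qeq_add); auto.
Qed.

Lemma dser_mul_lam_kernel (S : A -> Prop) :
  (forall a, S a -> lam_kernel a) ->
  forall j x, dser (mul_grp A) S j x ->
  lam_kernel x /\ exists y, dser (add_grp A) S j y /\ qeq x y.
Proof.
  intros HS j. induction j as [|j IH]; intros x Hx.
  - split; [apply HS, Hx|]. exists x. split; [exact Hx | apply qeq_refl].
  - simpl in Hx.
    induction Hx as [z [a [b [Ha [Hb ->]]]]| |x y _ IHx _ IHy|x _ IHx|x y Hxy _ IHx].
    + destruct (IH a Ha) as [Ka [a' [Ha' qa]]], (IH b Hb) as [Kb [b' [Hb' qb]]].
      split.
      * unfold commg; simpl.
        repeat apply lam_kernelM; try apply lam_kernelV; assumption.
      * exists (commg (add_grp A) a' b'). split.
        -- apply gen_in. exists a', b'. auto.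
        -- apply lam_kernel_commg_qeq; assumption.
    + split; [apply lam_kernel1|]. exists zero. split.
      * apply (gen_one (add_grp A)).
      * simpl. rewrite sb_one_zero. apply qeq_refl.
    + destruct IHx as [Kx [x' [Hx' qx]]], IHy as [Ky [y' [Hy' qy]]].
      split; [apply lam_kernelM; assumption|]. exists (add x' y'). split.
      * apply (gen_op (add_grp A)); assumption.
      * eapply qeq_trans; [apply lam_kernel_mul_qeq, Kx | apply qeq_add; assumption].
    + destruct IHx as [Kx [x' [Hx' qx]]].
      split; [apply lam_kernelV, Kx|]. exists (opp x'). split.
      * apply (gen_inv (add_grp A)); assumption.
      * eapply qeq_trans; [apply lam_kernel_inv_qeq, Kx | apply qeq_opp, qx].
    + simpl in Hxy. subst. exact IHx.
Qed.

End NormalSubgroup.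

Section CharacteristicSubgroup.
Variable B : A -> Prop.
Hypothesis B_char : add_characteristic A B.

Lemma char_aut_stable f x : add_aut A f -> B x -> B (f x).
Proof. intros Hf Hx. apply (proj2 B_char f Hf). exists x. auto. Qed.

Lemma conj_aut y : add_aut A (fun t => add (add (opp y) t) y).
Proof.
  split; [|split].
  - intros s t. rewrite <- !addrA, addNKr. reflexivity.
  - intros s t H. apply addIr, addrI in H. exact H.
  - intros t. exists (add (add y t) (opp y)).
    rewrite <- !addrA, addKr, addNr, addr0. reflexivity.
Qed.

Lemma char_normal_subgroup : add_normal_subgroup A B.
Proof.
  split; [apply B_char|]. intros y z Hz. exact (char_aut_stable _ _ (conj_aut y) Hz).
Qed.

Local Notation AutQ := (aut_quot A B).

Definition lamq (a : A) : gcar AutQ := (lam a, lam (inv a)).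

Lemma aut_quot_eq_ext (p q : gcar AutQ) :
  (forall x, fst p x = fst q x) -> (forall x, snd p x = snd q x) -> geq AutQ p q.
Proof.
  intros H1 H2 x. simpl. rewrite H1, H2.
  split; apply (qeq_refl B char_normal_subgroup).
Qed.

Lemma lamq_set a : aut_quot_set A B (lamq a).
Proof.
  pose proof (proj1 B_char) as [B0 _].
  unfold aut_quot_set, lamq, qeq; simpl. split; [|split; [|split]].
  - intros x y H. rewrite <- lam_opp, <- lam_add. apply char_aut_stable; [apply lam_aut | exact H].
  - intros x y H. rewrite <- lam_opp, <- lam_add. apply char_aut_stable; [apply lam_aut | exact H].
  - intros x y. rewrite lam_add, addNr. exact B0.
  - intros x. rewrite lamK, lamVK, addNr. split; exact B0.
Qed.

Lemma dser_lamq k a :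
  dser (mul_grp A) setT k a -> dser AutQ (aut_quot_set A B) k (lamq a).
Proof.
  apply dser_map.
  - intros x y Hxy. simpl in Hxy. subst. apply aut_quot_eq_ext; reflexivity.
  - apply aut_quot_eq_ext; intros x; simpl; rewrite ?invr1, lam1; reflexivity.
  - intros x y. apply aut_quot_eq_ext; intros z; simpl; rewrite ?invrM, lam_mul; reflexivity.
  - intros x. apply aut_quot_eq_ext; intros z; simpl; rewrite ?invrK; reflexivity.
  - intros x y. apply aut_quot_eq_ext; intros z; unfold commg; simpl;
      rewrite ?invrM, ?invrK, !lam_mul; reflexivity.
  - intros x _. apply lamq_set.
Qed.

Lemma lam_kernel_of_derived_trivial m :
  derived_trivial AutQ (aut_quot_set A B) (S m) ->
  forall a, dser (mul_grp A) setT m a -> lam_kernel B a.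
Proof. intros Htriv a Ha x. exact (proj1 (Htriv (lamq a) (dser_lamq m a Ha) x)). Qed.

End CharacteristicSubgroup.

End Brace.

Theorem corollary3p2 (A : skew_brace) (B : A -> Prop) (n m : nat) :
  add_characteristic A B ->
  0 < n ->
  (forall x, derived (add_grp A) setT n x -> B x) ->
  solvable_derived_length (aut_quot A B) (aut_quot_set A B) m ->
  forall x, derived (mul_grp A) setT (m + n) x -> B x.
Proof.
  intros B_char Hn Hadd [Htriv _] x Hx.
  destruct n as [|n]; [lia|].
  unfold derived in Hx. rewrite Nat.add_succ_r in Hx. simpl in Hx.
  pose proof (char_normal_subgroup A B B_char) as B_normal.
  destruct (dser_mul_lam_kernel A B B_normal (dser (mul_grp A) setT m)
              (lam_kernel_of_derived_trivial A B B_char m Htriv) n x (dser_add _ _ _ _ _ Hx))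
    as [_ [y [Hy Hxy]]].
  apply (qeq_mem A B B_normal x y Hxy), Hadd.
  exact (dser_mono _ _ _ (fun _ _ => I) n y Hy).
Qed.
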